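(* Let $\mathcal{C}$ be a binary linear $[n,k,d]$ code and let $s$ be an integer with $1\le s\le\min(d-1,n-k)$ such that $\mathrm{Aut}(\mathcal{C})$ is $s$-fold transitive. Then there exists a parity-check matrix $\mathbf{H}$ of $\mathcal{C}$ such that for every $b\le s$ and every $I\subseteq J$ with $1\le|I|\le b$, some $\pi\in\mathrm{Aut}(\mathcal{C})$ maps $I$ to a set $\pi(I)$ that is not a stopping set of $\mathbf{H}$; in particular, $b$-SAD sets of $\mathbf{H}$ exist for all $b\le s$.
   Context: Coordinates are indexed by $J=\{0,\ldots,n-1\}$. For a binary matrix, a row resolves a nonempty $I\subseteq J$ if its restriction to $I$ has Hamming weight exactly one; $I$ is a stopping set if no row resolves it. A parity-check matrix of $\mathcal{C}$ is an $(n-k)\times n$ binary matrix of full row rank whose row space is $\mathcal{C}^\perp$. $\mathrm{Aut}(\mathcal{C})$ is the group of permutations of $J$ mapping $\mathcal{C}$ onto itself. A permutation group on $J$ is $t$-fold transitive if for any two ordered $t$-tuples of distinct elements $(i_1,\ldots,i_t)$ and $(j_1,\ldots,j_t)$ of $J$ there is a group element mapping $i_r$ to $j_r$ for all $r$. For $b\le d-1$, a $b$-SAD set of $\mathbf{H}$ is a smallest set $S\subseteq\mathrm{Aut}(\mathcal{C})$ such that every $I\subseteq J$ with $1\le|I|\le b$ is mapped by some $\pi\in S$ to a set that is not a stopping set of $\mathbf{H}$. *)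

From HB Require Import structures.
From mathcomp Require Import all_boot all_order all_algebra all_fingroup.
Set Implicit Arguments. Unset Strict Implicit. Unset Printing Implicit Defensive.
Import GRing.Theory.
Local Open Scope ring_scope.

(* Coordinates J = 'I_n.  A binary linear code C of length n is the row space
   of a matrix C : 'M['F_2]_n (mxalgebra convention); v is a codeword iff
   (v <= C)%MS. Its dimension is \rank C. *)

Definition codeword n (C : 'M['F_2]_n) (v : 'rV['F_2]_n) : bool := (v <= C)%MS.

Definition wt n (v : 'rV['F_2]_n) : nat := #|[set j : 'I_n | v 0 j != 0]|.

Definition min_dist n (C : 'M['F_2]_n) (d : nat) : Prop :=
  (exists2 c, codeword C c & (c != 0) && (wt c == d)) /\
  (forall c, codeword C c -> c != 0 -> (d <= wt c)%N).

Definition is_code n (C : 'M['F_2]_n) (k d : nat) : Prop :=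
  \rank C = k /\ min_dist C d.

(* coordinate permutation: the permuted vector has v_i at position pi(i) *)
Definition permv n (pi : {perm 'I_n}) (v : 'rV['F_2]_n) : 'rV['F_2]_n :=
  \row_j v 0 ((pi^-1)%g j).

Definition in_Aut n (C : 'M['F_2]_n) (pi : {perm 'I_n}) : Prop :=
  forall v, codeword C (permv pi v) = codeword C v.

Definition t_transitive n (C : 'M['F_2]_n) (t : nat) : Prop :=
  forall i j : 'I_t -> 'I_n, injective i -> injective j ->
    exists2 pi, in_Aut C pi & forall r, pi (i r) = j r.

Definition in_dual n (C : 'M['F_2]_n) (u : 'rV['F_2]_n) : Prop :=
  forall c, codeword C c -> u *m c^T = 0.

Definition parity_check n k (C : 'M['F_2]_n) (H : 'M['F_2]_(n - k, n)) : Prop :=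
  \rank H = (n - k)%N /\ forall u, (u <= H)%MS <-> in_dual C u.

Definition resolves m n (H : 'M['F_2]_(m, n)) (r : 'I_m) (I : {set 'I_n}) : bool :=
  #|[set j in I | H r j != 0]| == 1%N.

Definition stopping m n (H : 'M['F_2]_(m, n)) (I : {set 'I_n}) : bool :=
  (I != set0) && [forall r, ~~ resolves H r I].

Definition covers m n (C : 'M['F_2]_n) (H : 'M['F_2]_(m, n)) (b : nat)
  (S : {set {perm 'I_n}}) : Prop :=
  (forall pi, pi \in S -> in_Aut C pi) /\
  forall I : {set 'I_n}, (1 <= #|I| <= b)%N ->
    exists2 pi, pi \in S & ~~ stopping H (pi @: I).

Definition SAD m n (C : 'M['F_2]_n) (H : 'M['F_2]_(m, n)) (b : nat)
  (S : {set {perm 'I_n}}) : Prop :=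
  covers C H b S /\ forall S', covers C H b S' -> (#|S| <= #|S'|)%N.

From HB Require Import structures.
From mathcomp Require Import all_boot all_order all_algebra all_fingroup.
From mathcomp Require Import zify.
From Stdlib Require Import Classical.
Set Implicit Arguments. Unset Strict Implicit. Unset Printing Implicit Defensive.
Import GRing.Theory.
Local Open Scope ring_scope.

(* Take the first s coordinates
   f = {0,...,s-1}.  A codeword supported on f has weight at most s < d, hence
   is zero; dually, the s columns of any parity-check matrix H0 indexed by f
   are linearly independent.  Row-reducing H0 therefore yields a parity-check
   matrix H with the same row space whose columns f form the identity on its
   first s rows ("systematic form").  Every nonempty set of coordinates inside
   f is then resolved by one of these rows, so it is not a stopping set.
   Finally, s-fold transitivity moves any set I with |I| <= s inside f, and a
   covering family of minimum size (a SAD set) exists because the whole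
   automorphism group is covering. *)

Lemma in_dual_iff n (C : 'M['F_2]_n) (u : 'rV_n) : in_dual C u <-> u *m C^T = 0.
Proof.
split=> [uC | uC0 c /submxP [w ->]]; last by rewrite trmx_mul mulmxA uC0 mul0mx.
apply/rowP => i; have := uC (row i C) (row_sub i C).
by rewrite tr_row colE mulmxA -colE => /matrixP /(_ 0 0); rewrite !mxE.
Qed.

Lemma parity_check_exists n k (C : 'M['F_2]_n) :
  \rank C = k -> exists H : 'M_(n - k, n), parity_check C H.
Proof.
move=> rkC; have rkK : \rank (kermx C^T) = (n - k)%N by rewrite mxrank_ker mxrank_tr rkC.
suff [H [rkH eqH]] : exists H : 'M_(n - k, n), \rank H = (n - k)%N /\ (H :=: kermx C^T)%MS.
  exists H; split=> // u; rewrite eqH sub_kermx.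
  by split=> [/eqP/in_dual_iff | /in_dual_iff/eqP].
rewrite -rkK; exists (row_base (kermx C^T)); split; last exact: eq_row_base.
by rewrite eq_row_base.
Qed.

Lemma parity_check_eqmx n k (C : 'M['F_2]_n) (H H0 : 'M_(n - k, n)) :
  parity_check C H0 -> (H :=: H0)%MS -> parity_check C H.
Proof. by move=> [rkH0 dualH0] eqH; split=> [|u]; rewrite eqH. Qed.

(* Double duality: the vectors annihilated by a parity-check matrix are
   codewords; the rows of (cokermx C)^T lie in the dual, hence in <H>. *)
Lemma parity_check_kernel n k (C : 'M['F_2]_n) (H : 'M_(n - k, n)) x :
  parity_check C H -> x *m H^T = 0 -> codeword C x.
Proof.
move=> [_ dualH] xH.
have cokerH : ((cokermx C)^T <= H)%MS.
  apply/row_subP => i; apply/dualH/in_dual_iff.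
  by rewrite -row_mul -trmx_mul mulmx_coker trmx0 row0.
have [W eW] := submxP cokerH.
by rewrite /codeword submxE -[cokermx C]trmxK eW trmx_mul mulmxA xH mul0mx.
Qed.

Lemma wt_le_support n (v : 'rV['F_2]_n) (A : {pred 'I_n}) :
  (forall j, j \notin A -> v 0 j = 0) -> (wt v <= #|A|)%N.
Proof.
move=> suppA; apply: subset_leq_card; apply/subsetP => j; rewrite inE.
by apply: contraR => /suppA ->; rewrite eqxx.
Qed.

Lemma light_codeword_eq0 n (C : 'M['F_2]_n) d x :
  min_dist C d -> codeword C x -> (wt x < d)%N -> x = 0.
Proof.
move=> [_ dC] Cx; rewrite ltnNge; apply: contraNeq => x0; exact: dC.
Qed.

(* The selection matrix colsub f 1 (n x s) extracts the columns indexed by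
   f : 'I_s -> 'I_n; its transpose extends a vector of 'I_s by zero. *)
Section Selection.
Variables (R : pzRingType) (n s : nat) (f : 'I_s -> 'I_n).

Lemma colsub_selection m (M : 'M[R]_(m, n)) : colsub f M = M *m colsub f 1%:M.
Proof. by rewrite mulmx_colsub mulmx1. Qed.

Lemma selection_orth : injective f ->
  (colsub f 1%:M)^T *m colsub f (1%:M : 'M[R]_n) = 1%:M.
Proof.
move=> finj; apply/matrixP => i i'; rewrite !mxE (bigD1 (f i)) //= big1 => [|j ji].
  by rewrite !mxE eqxx mul1r addr0 (inj_eq finj).
by rewrite !mxE (negbTE ji) mul0r.
Qed.

Lemma selection_support (z : 'rV[R]_s) j :
  j \notin codom f -> (z *m (colsub f 1%:M)^T) 0 j = 0.
Proof.
move=> jf; rewrite mxE big1 // => i _; rewrite !mxE.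
by case: eqP jf => [-> /negP[]|]; rewrite ?codom_f ?mulr0.
Qed.

End Selection.

(* Over any field, a full column rank matrix can be brought to pid_mx form by
   an invertible row operation.  The operation is built from the Gaussian
   elimination decomposition A = L * pid * U of mxalgebra, using the
   block-diagonal extension diag(U, 1) of an s x s matrix U to size m. *)
Section SystematicForm.
Variable F : fieldType.

(* pid_ext m U is the m x m block-diagonal matrix diag(U, 1). *)
Definition pid_ext m s (U : 'M[F]_s) : 'M[F]_m :=
  pid_mx s *m U *m pid_mx s + copid_mx s.

Section PidExt.
Variables m s : nat.
Hypothesis le_sm : (s <= m)%N.

Lemma pid_ext_pid (U : 'M[F]_s) :
  pid_ext m U *m (pid_mx s : 'M_(m, s)) = pid_mx s *m U.
Proof.
rewrite /pid_ext mulmxDl mul_copid_mx_pid // addr0 -mulmxA pid_mx_id //.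
by rewrite pid_mx_1 mulmx1.
Qed.

Lemma pid_ext_copid (U : 'M[F]_s) :
  pid_ext m U *m copid_mx s = copid_mx s.
Proof.
rewrite /pid_ext mulmxDl -mulmxA mul_pid_mx_copid // mulmx0 add0r.
exact: copid_mx_id.
Qed.

Lemma pid_ext_mul (U V : 'M[F]_s) :
  pid_ext m U *m pid_ext m V = pid_ext m (U *m V).
Proof.
rewrite [pid_ext m V]/pid_ext mulmxDr pid_ext_copid !mulmxA pid_ext_pid.
by rewrite /pid_ext !mulmxA.
Qed.

Lemma pid_ext1 : pid_ext m (1%:M : 'M[F]_s) = 1%:M.
Proof. by rewrite /pid_ext mulmx1 pid_mx_id // /copid_mx addrC subrK. Qed.

Lemma pid_ext_unit (U : 'M[F]_s) : U \in unitmx -> pid_ext m U \in unitmx.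
Proof.
move=> Uu; suff: pid_ext m (invmx U) *m pid_ext m U = 1%:M by case/mulmx1_unit.
by rewrite pid_ext_mul mulVmx // pid_ext1.
Qed.
End PidExt.

Lemma full_col_rank_normal m s (A : 'M[F]_(m, s)) :
  \rank A = s -> exists2 N, N \in unitmx & N *m A = pid_mx s.
Proof.
move=> rkA; have le_sm : (s <= m)%N by rewrite -rkA rank_leq_row.
exists (pid_ext m (invmx (row_ebase A)) *m invmx (col_ebase A)).
  by rewrite unitmx_mul pid_ext_unit ?unitmx_inv ?row_ebase_unit ?col_ebase_unit.
rewrite -[A in _ *m A = _]mulmx_ebase rkA !mulmxA mulmxKV ?col_ebase_unit //.
by rewrite pid_ext_pid // -mulmxA mulVmx ?row_ebase_unit // mulmx1.
Qed.

End SystematicForm.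

Lemma systematic_form (F : fieldType) m n s (H0 : 'M[F]_(m, n)) (f : 'I_s -> 'I_n) :
  \rank (colsub f H0) = s -> exists2 H : 'M[F]_(m, n), (H :=: H0)%MS & colsub f H = pid_mx s.
Proof.
move=> /full_col_rank_normal [N Nu NH0]; exists (N *m H0); last by rewrite -mulmx_colsub.
by apply: eqmxMfull; rewrite row_full_unit.
Qed.

(* The columns of a parity-check matrix indexed by fewer than d coordinates
   are independent: a dependency would give a nonzero codeword supported on
   them, of weight < d. *)
Lemma colsub_parity_rank n k d s (C : 'M['F_2]_n) (H0 : 'M_(n - k, n))
    (f : 'I_s -> 'I_n) :
  parity_check C H0 -> min_dist C d -> injective f -> (s < d)%N ->
  \rank (colsub f H0) = s.
Proof.
move=> pcH0 dC finj lt_sd; rewrite -mxrank_tr; apply/eqP/inj_row_free => z zH.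
have x0 : z *m (colsub f 1%:M)^T = 0.
  apply: (light_codeword_eq0 dC).
    apply: (parity_check_kernel pcH0).
    by rewrite -mulmxA -trmx_mul -colsub_selection.
  apply: leq_ltn_trans lt_sd; rewrite -[X in (_ <= X)%N]card_ord -(card_codom finj).
  exact/wt_le_support/selection_support.
by rewrite -[z]mulmx1 -(selection_orth _ finj) mulmxA x0 mul0mx.
Qed.

(* In a matrix whose columns f form the identity on the first s rows, a
   nonempty set I inside f is resolved by the row of any of its elements. *)
Lemma pid_colsub_not_stopping m n s (H : 'M['F_2]_(m, n)) (f : 'I_s -> 'I_n)
    (le_sm : (s <= m)%N) (I : {set 'I_n}) :
  colsub f H = pid_mx s -> I != set0 -> I \subset codom f ->
  ~~ stopping H I.
Proof.
move=> Hf /set0Pn [y yI] If.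
have /codomP [r ey] := subsetP If y yI.
pose r' := widen_ord le_sm r.
have Hr' r2 : (H r' (f r2) != 0) = (r == r2).
  have := congr1 (fun M : 'M_(m, s) => M r' r2) Hf; rewrite /= !mxE /r' /= ltn_ord andbT => ->.
  case: (eqVneq r r2) => [<-|ne]; first by rewrite eqxx oner_eq0.
  by have ne' : (r : nat) != r2 := ne; rewrite (negbTE ne') eqxx; apply/esym/negbTE.
rewrite /stopping negb_and negb_forall; apply/orP; right; apply/existsP.
exists r'; rewrite negbK /resolves.
suff -> : [set j in I | H r' j != 0] = [set y] by rewrite cards1.
apply/setP => j; rewrite !inE; apply/andP/eqP => [[jI]|->]; last first.
  by rewrite yI ey Hr' eqxx.
by have /codomP [r2 ->] := subsetP If j jI; rewrite Hr' ey => /eqP <-.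
Qed.

Lemma extend_to_card (T : finType) (I : {set T}) s :
  (#|I| <= s <= #|T|)%N -> exists2 J : {set T}, I \subset J & #|J| = s.
Proof.
elim: s => [|s IH] /andP [Is sT].
  by exists I => //; apply/eqP; rewrite -leqn0.
have [eqI | neI] := eqVneq #|I| s.+1; first by exists I.
have [J IJ cJ] : exists2 J : {set T}, I \subset J & #|J| = s.
  by apply: IH; rewrite -ltnS ltn_neqAle neI Is ltnW.
have /set0Pn [x xJ] : ~: J != set0 by rewrite -card_gt0 cardsCs setCK cJ subn_gt0.
exists (x |: J); first exact: subset_trans IJ (subsetUr _ _).
by move: xJ; rewrite cardsU1 in_setC cJ => ->.
Qed.

(* With s-fold transitivity, any I with |I| <= s is moved inside the image of
   a given injection f of 'I_s: map an s-set containing I onto the image. *)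
Lemma transitive_maps_into n s (C : 'M['F_2]_n) (f : 'I_s -> 'I_n) (I : {set 'I_n}) :
  t_transitive C s -> injective f -> (#|I| <= s)%N ->
  exists2 pi, in_Aut C pi & pi @: I \subset codom f.
Proof.
move=> trC finj Is.
have sn : (s <= #|'I_n|)%N by rewrite -[X in (X <= _)%N]card_ord; exact: leq_card finj.
have [J IJ cJ] := extend_to_card (introT andP (conj Is sn)).
pose e (r : 'I_s) : 'I_n := enum_val (cast_ord (esym cJ) r).
have einj : injective e by move=> r1 r2 /enum_val_inj /cast_ord_inj.
have [pi Api pie] := trC e f einj finj.
exists pi => //; apply/subsetP => _ /imsetP [x xI ->].
have xJ := subsetP IJ x xI.
have -> : x = e (cast_ord cJ (enum_rank_in xJ x)) by rewrite /e cast_ordK enum_rankK_in.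
by rewrite pie codom_f.
Qed.

Lemma exists_min_card (T : finType) (P : {set T} -> Prop) :
  (exists A, P A) -> exists A, P A /\ forall B, P B -> (#|A| <= #|B|)%N.
Proof.
case=> A; elim: {A}#|A|.+1 {-2}A (ltnSn #|A|) => // c IH A ltAc PA.
have [[B PB ltBA] | noB] := classic (exists2 B, P B & (#|B| < #|A|)%N).
  exact: IH B (leq_trans ltBA ltAc) PB.
by exists A; split=> // B PB; rewrite leqNgt; apply/negP => ltBA; apply: noB; exists B.
Qed.

Definition Aut_set n (C : 'M['F_2]_n) : {set {perm 'I_n}} :=
  [set pi | [forall v, codeword C (permv pi v) == codeword C v]].

Lemma Aut_setP n (C : 'M['F_2]_n) pi : reflect (in_Aut C pi) (pi \in Aut_set C).
Proof. by rewrite inE; apply: (iffP forallP) => Api v; apply/eqP; exact: Api. Qed.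

Theorem lemma5 (n k d s : nat) (C : 'M['F_2]_n) :
  is_code C k d ->
  (1 <= s)%N -> (s <= d - 1)%N -> (s <= n - k)%N ->
  t_transitive C s ->
  exists H : 'M['F_2]_(n - k, n),
    parity_check C H /\
    forall b, (b <= s)%N ->
      (forall I : {set 'I_n}, (1 <= #|I| <= b)%N ->
         exists2 pi, in_Aut C pi & ~~ stopping H (pi @: I)) /\
      (exists S, SAD C H b S).
Proof.
move=> [rkC dC] s_gt0 sd sk trC.
have lt_sd : (s < d)%N by lia.
have sn : (s <= n)%N by lia.
pose f := widen_ord sn; have finj : injective f by move=> r1 r2 /(congr1 val) /= /ord_inj.
have [H0 pcH0] := parity_check_exists rkC.
have [H eqH Hf] := systematic_form (colsub_parity_rank pcH0 dC finj lt_sd).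
have cover_s (I : {set 'I_n}) : (1 <= #|I| <= s)%N ->
    exists2 pi, in_Aut C pi & ~~ stopping H (pi @: I).
  move=> /andP [I_gt0 Is]; have [pi Api Ipi] := transitive_maps_into trC finj Is.
  exists pi => //; apply: pid_colsub_not_stopping sk _ Hf _ Ipi.
  by rewrite -card_gt0 card_imset //; exact: perm_inj.
exists H; split; first exact: parity_check_eqmx pcH0 eqH.
move=> b bs; have cover_b (I : {set 'I_n}) : (1 <= #|I| <= b)%N ->
    exists2 pi, in_Aut C pi & ~~ stopping H (pi @: I).
  by move=> /andP [I_gt0 Ib]; apply: cover_s; rewrite I_gt0 (leq_trans Ib bs).
split=> //; apply: exists_min_card; exists (Aut_set C); split.
  by move=> pi /Aut_setP.
by move=> I /cover_b [pi /Aut_setP Api npi]; exists pi.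
Qed.
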